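(* Let $(X,d)$ be a separable metric space, $T\colon X\to X$ a Borel measurable map, $(s_n)_{n\ge1}$ a scale sequence, and $\mu,\nu$ Borel probability measures on $X$ (not necessarily $T$-invariant). Assume $\nu$ is decisive. Then $\phi(x,y)=\liminf_{n\to\infty}s_n\,d(T^nx,y)$ satisfies $\phi(x,y)\in\{0,\infty\}$ for $\mu\times\nu$-almost every $(x,y)$.
   Context: A scale sequence is a sequence of positive reals $s_n$ with $s_n\to\infty$. A Borel probability measure $\nu$ on $(X,d)$ is decisive if for every sequence $(x_n)$ in $X$ and every scale sequence $(s_n)$, the function $\omega(x)=\liminf_n s_n d(x_n,x)$ lies in $\{0,\infty\}$ for $\nu$-a.e. $x$. *)

From HB Require Import structures.
From mathcomp Require Import all_boot all_order all_algebra.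
From mathcomp Require Import all_classical all_reals all_analysis.
Set Implicit Arguments. Unset Strict Implicit. Unset Printing Implicit Defensive.
Import Order.TTheory GRing.Theory Num.Theory.
Local Open Scope classical_set_scope.
Local Open Scope ring_scope.

Definition is_metric {R : realType} {X : Type} (d : X -> X -> R) : Prop :=
  [/\ (forall x y, 0 <= d x y),
      (forall x y, d x y = 0 <-> x = y),
      (forall x y, d x y = d y x) &
      (forall x y z, d x z <= d x y + d y z)].

Definition metric_open {R : realType} {X : Type} (d : X -> X -> R) (A : set X) : Prop :=
  forall x, A x -> exists2 e : R, 0 < e & [set y | d x y < e] `<=` A.

Definition metric_separable {R : realType} {X : Type} (d : X -> X -> R) : Prop :=
  exists D : set X, countable D /\
    forall x (e : R), 0 < e -> exists2 y, D y & d x y < e.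

Definition is_borel_of {R : realType} {dX : measure_display} {X : measurableType dX}
  (d : X -> X -> R) : Prop :=
  (@measurable _ X) = <<s [set A | metric_open d A] >>.

Definition scale_sequence {R : realType} (s : nat -> R) : Prop :=
  (forall n, 0 < s n) /\ (s @ \oo --> +oo).

Definition decisive {R : realType} {dX : measure_display} {X : measurableType dX}
  (d : X -> X -> R) (nu : probability X R) : Prop :=
  forall (xs : nat -> X) (s : nat -> R), scale_sequence s ->
    {ae nu, forall x, limn_einf (fun n => (s n * d (xs n) x)%:E) = 0%E
                  \/ limn_einf (fun n => (s n * d (xs n) x)%:E) = +oo%E}.

From HB Require Import structures.
From mathcomp Require Import all_boot all_order all_algebra.
From mathcomp Require Import all_classical all_reals all_analysis.
From mathcomp Require Import measurable_realfun lra.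
Set Implicit Arguments. Unset Strict Implicit. Unset Printing Implicit Defensive.
Import Order.TTheory GRing.Theory Num.Theory.
Local Open Scope classical_set_scope.
Local Open Scope ring_scope.

(* For a fixed x, decisiveness of nu applied to the orbit (T^n x) says that the
   x-section of the bad set {(x, y) | phi(x, y) \notin {0, +oo}} is nu-null;
   integrating over x gives that the bad set is (mu \x nu)-null.  The only real
   work is the measurability of the bad set, which reduces to the measurability
   of d on X * X: by separability, [d x y < r] is a countable union of
   rectangles of balls around the points of a dense sequence. *)

Lemma measurable_fun_limn_einf (R : realType) (dT : measure_display)
    (T : measurableType dT) (D : set T) (f : (T -> \bar R)^nat) :
  (forall n, measurable_fun D (f n)) ->
  measurable_fun D (fun x => limn_einf (f ^~ x)).
Proof.
move=> mf; apply: (measurableT_comp (f := -%E)); first exact: oppe_measurable.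
apply: (measurable_fun_limn_esup (f := fun n x => - f n x)%E) => n.
by apply: measurableT_comp => //; exact: oppe_measurable.
Qed.

Lemma measurable_iter (dX : measure_display) (X : measurableType dX)
    (T : X -> X) (n : nat) :
  measurable_fun setT T -> measurable_fun setT (iter n T).
Proof.
move=> mT; elim: n => [|n IH] /=; first exact: measurable_id.
exact: (measurableT_comp (f := T) (g := iter n T)).
Qed.

Lemma ae_product_measure1 (R : realType) (d1 d2 : measure_display)
    (T1 : measurableType d1) (T2 : measurableType d2)
    (m1 : {measure set T1 -> \bar R}) (m2 : {sigma_finite_measure set T2 -> \bar R})
    (P : T1 * T2 -> Prop) :
  measurable [set p | ~ P p] -> (forall x, {ae m2, forall y, P (x, y)}) ->
  {ae (m1 \x m2)%E, forall p, P p}.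
Proof.
move=> mnP aeP; exists [set p | ~ P p]; split => //.
rewrite /= /product_measure1 (eq_integral (cst 0%E)) ?integral0 // => x _ /=.
have [N [mN N0 nPN]] := aeP x.
apply: (subset_measure0 (measurable_xsection x mnP) mN _ N0) => y.
by rewrite /xsection /= inE; exact: nPN.
Qed.

Lemma separable_dense_seq (R : realType) (X : Type) (d : X -> X -> R) (x0 : X) :
  metric_separable d ->
  exists g : nat -> X, forall x (e : R), 0 < e -> exists k, d x (g k) < e.
Proof.
move=> [D [cD dense]]; move/pfcard_geP: cD => [D0|/surjfunPex[g Dg]].
  by have [y + _] := dense x0 1 ltr01; rewrite D0.
exists g => x e e0; have [y + xy] := dense x e e0.
by rewrite Dg => -[k _ gk]; exists k; rewrite gk.
Qed.

Lemma natSinv_lt (R : archiRealFieldType) (e : R) : 0 < e -> exists m : nat, m.+1%:R^-1 < e.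
Proof.
move=> e0; exists (Num.truncn e^-1).
by rewrite -ltf_pV2 ?posrE ?invr_gt0 // invrK truncnS_gt.
Qed.

Section metric_borel.
Variables (R : realType) (dX : measure_display) (X : measurableType dX).
Variable d : X -> X -> R.
Hypothesis hd : is_metric d.
Hypothesis hb : is_borel_of d.

Lemma metric_ball_measurable (c : X) (e : R) : measurable [set y | d c y < e].
Proof.
rewrite hb; apply: sub_sigma_algebra => x /= cx.
have [_ _ _ tri] := hd.
exists (e - d c x) => [|y /= xy]; first by rewrite subr_gt0.
by have := tri c x y; lra.
Qed.

(* Approximating x by a point g k of the dense sequence within 1/(m+1), with
   2/(m+1) < r - d x y, splits [d x y < r] through the centre g k. *)
Lemma dist_lt_bigcup (g : nat -> X) (r : R) :
  (forall x (e : R), 0 < e -> exists k, d x (g k) < e) ->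
  [set p : X * X | d p.1 p.2 < r] =
  \bigcup_k \bigcup_m
    ([set x | d (g k) x < m.+1%:R^-1] `*` [set y | d (g k) y < r - m.+1%:R^-1]).
Proof.
have [_ _ sym tri] := hd.
move=> dense; apply/seteqP; split => [[x y] /= xy|[x y] [k _ [m _ []]]] /=.
- have [m mr] : exists m : nat, m.+1%:R^-1 < (r - d x y) / 2.
    by apply: natSinv_lt; rewrite divr_gt0 // subr_gt0.
  have m0 : 0 < m.+1%:R^-1 :> R by rewrite invr_gt0 ltr0n.
  have [k xk] := dense x _ m0.
  exists k => //; exists m => //; rewrite /= sym in xk; split => //=.
  by have := tri (g k) x y; move: mr xk; set a := m.+1%:R^-1; lra.
- rewrite sym; set a := m.+1%:R^-1 => kx ky.
  by have := tri x (g k) y; lra.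
Qed.

Lemma measurable_dist : metric_separable d ->
  measurable_fun setT (fun p : X * X => d p.1 p.2).
Proof.
move=> sep; case: (pselect (exists x : X, True)) => [[x0 _]|X0]; last first.
  move=> _ B _; rewrite (_ : _ `&` _ = set0) //.
  by apply/seteqP; split => // -[x y]; exfalso; apply: X0; exists x.
have [g dense] := separable_dense_seq x0 sep.
apply: (measurability _ (RGenInftyO.measurableE R)) => _ [_ [r ->] <-].
rewrite setTI (_ : _ @^-1` _ = [set p : X * X | d p.1 p.2 < r]); last first.
  by apply/seteqP; split => p /=; rewrite in_itv.
rewrite (dist_lt_bigcup r dense).
by do 2 apply: bigcupT_measurable => ?; apply: measurableX; exact: metric_ball_measurable.
Qed.

End metric_borel.

Theorem theorem5p3 (R : realType) (dX : measure_display) (X : measurableType dX)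
  (d : X -> X -> R) (T : X -> X) (s : nat -> R)
  (mu nu : probability X R) :
  is_metric d -> metric_separable d -> is_borel_of d ->
  measurable_fun setT T ->
  scale_sequence s ->
  decisive d nu ->
  {ae (mu \x nu)%E, forall p : X * X,
     limn_einf (fun n => (s n * d (iter n T p.1) p.2)%:E) = 0%E
  \/ limn_einf (fun n => (s n * d (iter n T p.1) p.2)%:E) = +oo%E}.
Proof.
move=> hd sep hb mT hs hdec.
apply: ae_product_measure1 => [|x]; last exact: (hdec (fun n => iter n T x)).
pose phi p := limn_einf (fun n => (s n * d (iter n T p.1) p.2)%:E).
have mphi : measurable_fun setT phi.
  apply: measurable_fun_limn_einf => n; apply/measurable_EFinP.
  apply: measurableT_comp (mulrl_measurable (s n)) _.
  apply: (measurableT_comp (measurable_dist hd hb sep)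
    (g := fun p : X * X => (iter n T p.1, p.2))).
  apply: measurable_fun_pair => //=.
  exact: measurableT_comp (measurable_iter n mT) _.
rewrite (_ : [set p | _] = setT `&` phi @^-1` ~` ([set 0%E] `|` [set +oo%E])).
  by apply: mphi => //; apply/measurableC/measurableU; exact: emeasurable_set1.
by apply/seteqP; split => p /=; [move=> h; split => //= -[]|case].
Qed.
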